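(* Let $H$ be a group, $A$ either the empty set or a normal subgroup of $H$, and for $1\leq l\leq m$ let $\mathcal E_{l,m}$ be the subgroup generated by all $[x_1,\ldots,x_i]^{2^{m-i-k}}$ with $l\leq i\leq m$, $0\leq k\leq m-i$, $x_1,\ldots,x_i\in H$ and at least $k$ of the entries $x_{j_1},\ldots,x_{j_k}$ ($j_1<\cdots<j_k$) lying in $A$; write $\widetilde{\mathcal E}_{l,m}$ when $A=\varnothing$. Then for all $1\leq l\leq m$, $[\mathcal E_{l,m},H]\subseteq\mathcal E_{l+1,m+1}$ and $[\widetilde{\mathcal E}_{l,m},H]\subseteq\widetilde{\mathcal E}_{l+1,m+1}$.
   Context: $[a,b]=aba^{-1}b^{-1}$; right-normed iterated commutators $[x_1,\ldots,x_n]=[x_1,[x_2,\ldots,[x_{n-1},x_n]]]$. *)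

From Stdlib Require Import List Arith Sorted.
Import ListNotations.

Record Group := {
  carrier :> Type;
  gmul : carrier -> carrier -> carrier;
  gone : carrier;
  ginv : carrier -> carrier;
  gmulA : forall x y z, gmul x (gmul y z) = gmul (gmul x y) z;
  gmul1l : forall x, gmul gone x = x;
  gmul1r : forall x, gmul x gone = x;
  gmulVl : forall x, gmul (ginv x) x = gone;
  gmulVr : forall x, gmul x (ginv x) = gone
}.

Section Defs.
Variable G : Group.

Definition comm (a b : G) : G :=
  gmul G a (gmul G b (gmul G (ginv G a) (ginv G b))).

(* right-normed iterated commutator [x1,...,xn] = [x1,[x2,...,[x_{n-1},x_n]]];
   [x1] = x1; the empty list is never used (we always take length i >= 1). *)
Fixpoint rcomm (xs : list G) : G :=
  match xs with
  | [] => gone G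
  | [x] => x
  | x :: ys => comm x (rcomm ys)
  end.

Fixpoint gpow (x : G) (n : nat) : G :=
  match n with
  | 0 => gone G
  | S n => gmul G x (gpow x n)
  end.

Inductive gen (S : G -> Prop) : G -> Prop :=
  | gen_base : forall x, S x -> gen S x
  | gen_one : gen S (gone G)
  | gen_mul : forall x y, gen S x -> gen S y -> gen S (gmul G x y)
  | gen_inv : forall x, gen S x -> gen S (ginv G x).

Definition normal_subgroup (A : G -> Prop) : Prop :=
  A (gone G) /\
  (forall x y, A x -> A y -> A (gmul G x y)) /\
  (forall x, A x -> A (ginv G x)) /\
  (forall g a, A a -> A (gmul G g (gmul G a (ginv G g)))).

Definition k_entries_in (A : G -> Prop) (k : nat) (xs : list G) : Prop :=
  exists js : list nat, length js = k /\ Sorted lt js /\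
    forall j, In j js -> j < length xs /\ A (nth j xs (gone G)).

Definition E_gens (A : G -> Prop) (l m : nat) (y : G) : Prop :=
  exists (i k : nat) (xs : list G),
    l <= i /\ i <= m /\ k <= m - i /\ length xs = i /\
    k_entries_in A k xs /\ y = gpow (rcomm xs) (2 ^ (m - i - k)).

Definition E (A : G -> Prop) (l m : nat) : G -> Prop := gen (E_gens A l m).

Definition Etilde (l m : nat) : G -> Prop := E (fun _ => False) l m.

Definition commH (X : G -> Prop) : G -> Prop :=
  gen (fun z => exists x h, X x /\ z = comm x h).

End Defs.

(* Since [E_{l,m}] is normal, the commutator
   identities [xy,h] = x[y,h]x^-1 [x,h] and [x^-1,h] = x^-1 [x,h]^-1 x reduce
   [E_{l,m},H] to commutators [g,h] with g a generator c^(2^e), c = [x_1,...,x_i].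
   If e = 0, then [c,h] = [h,x_1,...,x_i]^-1 is itself a generator of
   E_{l+1,m+1}.  Otherwise g = y^2 with y in E_{l,m-1}, and
   [y^2,h] = [f,y]^-1 f^2 with f = [y,h] in E_{l+1,m} by induction; then
   [f,y] lies in E_{l+2,m+1}, again by induction, and f^2 in E_{l+1,m+1}
   because squaring lowers the exponent index:
   (ab)^2 = a^2 [a^-1,b] b^2 with [a^-1,b] in [E_{l+1,m},H]. *)

From Stdlib Require Import List Arith Sorted Lia.
Import ListNotations.

Local Notation "x ** y" := (gmul _ x y) (at level 40, left associativity).
Local Notation "x ^-" := (ginv _ x) (at level 3).

Section GroupIdentities.
Variable G : Group.
Implicit Types x y g h : G.

Lemma mulKVg x y : x ** (x ^- ** y) = y.
Proof. now rewrite gmulA, gmulVr, gmul1l. Qed.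

Lemma mulVKg x y : x ^- ** (x ** y) = y.
Proof. now rewrite gmulA, gmulVl, gmul1l. Qed.

Lemma invg_unique x y : x ** y = gone G -> x ^- = y.
Proof. intros hxy. now rewrite <- (gmul1r _ (x ^-)), <- hxy, gmulA, gmulVl, gmul1l. Qed.

Lemma invgM x y : (x ** y) ^- = y ^- ** x ^-.
Proof. apply invg_unique. now rewrite <- !gmulA, mulKVg, gmulVr. Qed.

Lemma invgK x : (x ^-) ^- = x.
Proof. apply invg_unique, gmulVl. Qed.

Lemma invg1 : (gone G) ^- = gone G.
Proof. apply invg_unique, gmul1l. Qed.

End GroupIdentities.

Global Hint Rewrite <- @gmulA : group_simpl.
Global Hint Rewrite @mulKVg @mulVKg @invgM @invgK @invg1 @gmulVr @gmulVl
  @gmul1l @gmul1r : group_simpl.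

Ltac group_eq := unfold comm; autorewrite with group_simpl; reflexivity.

Definition gconj {G : Group} (g x : G) : G := g ** x ** g ^-.

Definition conj_closed {G : Group} (S : G -> Prop) : Prop :=
  forall g x, S x -> S (gconj g x).

Section Commutators.
Variable G : Group.
Implicit Types x y g h : G.

Lemma comm_mul_l x y h : comm G (x ** y) h = gconj x (comm G y h) ** comm G x h.
Proof. unfold gconj; group_eq. Qed.

Lemma comm_inv_l x h : comm G (x ^-) h = gconj (x ^-) ((comm G x h) ^-).
Proof. unfold gconj; group_eq. Qed.

Lemma invg_comm x y : (comm G y x) ^- = comm G x y.
Proof. group_eq. Qed.

Lemma sqrgM x y : (x ** y) ** (x ** y) = (x ** x) ** (comm G (x ^-) y ** (y ** y)).
Proof. group_eq. Qed.

Lemma comm_sqr_l x h :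
  comm G (x ** x) h = (comm G (comm G x h) x) ^- ** (comm G x h ** comm G x h).
Proof. group_eq. Qed.

Lemma gpowD x a b : gpow G x (a + b) = gpow G x a ** gpow G x b.
Proof. induction a as [|a IH]; simpl; [|rewrite IH]; group_eq. Qed.

Lemma gpow_pow2S x n : gpow G x (2 ^ S n) = gpow G x (2 ^ n) ** gpow G x (2 ^ n).
Proof. rewrite <- gpowD. f_equal. simpl. lia. Qed.

Lemma gpow_conj g x n : gpow G (gconj g x) n = gconj g (gpow G x n).
Proof. unfold gconj. induction n as [|n IH]; simpl; [|rewrite IH]; group_eq. Qed.

Lemma rcomm_cons x xs : xs <> [] -> rcomm G (x :: xs) = comm G x (rcomm G xs).
Proof. destruct xs; [congruence | reflexivity]. Qed.

Lemma rcomm_conj g xs : rcomm G (map (gconj g) xs) = gconj g (rcomm G xs).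
Proof.
  induction xs as [|x [|y ys] IH]; simpl; try reflexivity.
  - unfold gconj; group_eq.
  - change (comm G (gconj g x) (rcomm G (map (gconj g) (y :: ys)))
            = gconj g (comm G x (rcomm G (y :: ys)))).
    rewrite IH. unfold gconj; group_eq.
Qed.

End Commutators.

Section Generation.
Variable G : Group.

Lemma gen_sub_gen (S T : G -> Prop) :
  (forall x, S x -> gen G T x) -> forall x, gen G S x -> gen G T x.
Proof.
  intros hST x hx. induction hx.
  - auto.
  - apply gen_one.
  - now apply gen_mul.
  - now apply gen_inv.
Qed.

Lemma gen_conj_closed (S : G -> Prop) : conj_closed S -> conj_closed (gen G S).
Proof.
  intros hS g x hx. induction hx.
  - now apply gen_base, hS.
  - replace (gconj g (gone G)) with (gone G) by (unfold gconj; group_eq).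
    apply gen_one.
  - replace (gconj g (x ** y)) with (gconj g x ** gconj g y) by (unfold gconj; group_eq).
    now apply gen_mul.
  - replace (gconj g (x ^-)) with ((gconj g x) ^-) by (unfold gconj; group_eq).
    now apply gen_inv.
Qed.

Lemma commH_gen (S T : G -> Prop) :
  conj_closed T ->
  (forall s h, S s -> gen G T (comm G s h)) ->
  forall z, commH G (gen G S) z -> gen G T z.
Proof.
  intros hT hS. apply gen_sub_gen. intros z [x [h [hx ->]]].
  pose proof (gen_conj_closed T hT) as hgT.
  induction hx.
  - now apply hS.
  - replace (comm G (gone G) h) with (gone G) by group_eq. apply gen_one.
  - rewrite comm_mul_l. apply gen_mul; auto.
  - rewrite comm_inv_l. apply hgT, gen_inv; auto.
Qed.

End Generation.

Lemma Sorted_lt_map_S (js : list nat) : Sorted lt js -> Sorted lt (map S js).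
Proof.
  induction 1 as [|j0 js0 _ IH hj]; simpl; constructor; auto.
  destruct hj; simpl; constructor; lia.
Qed.

Section Entries.
Variables (G : Group) (A : G -> Prop).

Lemma k_entries_in_map (f : G -> G) k xs :
  (forall a, A a -> A (f a)) -> k_entries_in G A k xs -> k_entries_in G A k (map f xs).
Proof.
  intros hf [js [hlen [hsort hjs]]]. exists js. split; [exact hlen|split; [exact hsort|]].
  intros j hj. destruct (hjs j hj) as [hjlt hA]. split.
  - now rewrite length_map.
  - rewrite (nth_indep _ _ (f (gone G))) by now rewrite length_map.
    rewrite map_nth. auto.
Qed.

Lemma k_entries_in_cons k h xs :
  k_entries_in G A k xs -> k_entries_in G A k (h :: xs).
Proof.
  intros [js [hlen [hsort hjs]]]. exists (map S js). split; [|split].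
  - now rewrite length_map.
  - now apply Sorted_lt_map_S.
  - intros j hj. apply in_map_iff in hj as [j' [<- hj']].
    destruct (hjs j' hj') as [hlt hA]. simpl. split; [lia | exact hA].
Qed.

End Entries.

Section ExponentFiltration.
Variables (G : Group) (A : G -> Prop).
Hypothesis A_conj : conj_closed A.

Lemma E_gen_pow l m i k xs :
  l <= i -> i <= m -> k <= m - i -> length xs = i -> k_entries_in G A k xs ->
  E G A l m (gpow G (rcomm G xs) (2 ^ (m - i - k))).
Proof. intros. apply gen_base. exists i, k, xs. repeat split; auto. Qed.

Lemma E_sub_l l l' m x : l <= l' -> E G A l' m x -> E G A l m x.
Proof.
  intros hl. apply gen_sub_gen. intros y [i [k [xs [? [? [? [? [? ->]]]]]]]].
  apply E_gen_pow; auto; lia.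
Qed.

Lemma E_gens_conj_closed l m : conj_closed (E_gens G A l m).
Proof.
  intros g y [i [k [xs [? [? [? [hlen [hk ->]]]]]]]].
  rewrite <- gpow_conj, <- rcomm_conj. exists i, k, (map (gconj g) xs).
  repeat split; auto; [now rewrite length_map | now apply k_entries_in_map; auto].
Qed.

Lemma E_sqr_sub l m :
  (forall z, commH G (E G A l m) z -> E G A (S l) (S m) z) ->
  forall x, E G A l m x -> E G A l (S m) (x ** x).
Proof.
  intros hcomm x hx. induction hx as [x hx| |x y hx IHx hy IHy|x hx IHx].
  - destruct hx as [i [k [xs [? [? [? [? [? ->]]]]]]]].
    rewrite <- gpowD.
    replace (2 ^ (m - i - k) + 2 ^ (m - i - k)) with (2 ^ (S m - i - k))
      by (replace (S m - i - k) with (S (m - i - k)) by lia; simpl; lia).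
    apply E_gen_pow; auto; lia.
  - rewrite gmul1l. apply gen_one.
  - rewrite sqrgM. apply gen_mul; [exact IHx|]. apply gen_mul; [|exact IHy].
    apply (E_sub_l l (S l)); [lia|]. apply hcomm, gen_base.
    exists (x ^-), y. split; [now apply gen_inv | reflexivity].
  - replace (x ^- ** x ^-) with ((x ** x) ^-) by group_eq. now apply gen_inv.
Qed.

Lemma comm_E_gen_pow1 l m i k xs h :
  1 <= l -> l <= i -> i <= m -> k <= m - i -> length xs = i ->
  k_entries_in G A k xs -> m - i - k = 0 ->
  E G A (S l) (S m) (comm G (gpow G (rcomm G xs) (2 ^ 0)) h).
Proof.
  intros hl hli him hk hlen hA he.
  assert (hne : xs <> []) by (intros ->; simpl in hlen; lia).
  replace (comm G (gpow G (rcomm G xs) (2 ^ 0)) h)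
    with ((gpow G (rcomm G (h :: xs)) (2 ^ (S m - S i - k))) ^-).
  - apply gen_inv, E_gen_pow; simpl; auto; try lia.
    now apply k_entries_in_cons.
  - replace (S m - S i - k) with 0 by lia.
    rewrite rcomm_cons by exact hne. simpl. rewrite !gmul1r. apply invg_comm.
Qed.

Lemma commH_E_sub l m :
  1 <= l -> forall z, commH G (E G A l m) z -> E G A (S l) (S m) z.
Proof.
  remember (m - l) as d eqn:hd. revert l m hd.
  induction d as [d IH] using lt_wf_ind. intros l m hd hl.
  apply commH_gen; [apply E_gens_conj_closed|].
  intros g h [i [k [xs [? [? [? [? [? ->]]]]]]]].
  destruct (m - i - k) as [|n] eqn:he; [now apply (comm_E_gen_pow1 l m i k)|].
  set (y := gpow G (rcomm G xs) (2 ^ n)).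
  assert (hf : E G A (S l) m (comm G y h)).
  { replace m with (S (m - 1)) by lia.
    apply (IH (m - 1 - l)); try lia. apply gen_base. exists y, h. split; [|reflexivity].
    unfold y. replace n with (m - 1 - i - k) by lia. apply E_gen_pow; auto; lia. }
  assert (IHSl : forall z, commH G (E G A (S l) m) z -> E G A (S (S l)) (S m) z)
    by (apply (IH (m - S l)); lia).
  rewrite gpow_pow2S. fold y. rewrite comm_sqr_l.
  apply gen_mul.
  - apply gen_inv, (E_sub_l (S l) (S (S l))); [lia|].
    apply IHSl, gen_base. now exists (comm G y h), y.
  - now apply E_sqr_sub.
Qed.

End ExponentFiltration.

Theorem corollary5p8 (H : Group) (A : H -> Prop)
  (hA : (forall x, ~ A x) \/ normal_subgroup H A) :
  forall l m : nat, 1 <= l -> l <= m ->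
    (forall z, commH H (E H A l m) z -> E H A (S l) (S m) z) /\
    (forall z, commH H (Etilde H l m) z -> Etilde H (S l) (S m) z).
Proof.
  intros l m hl _. split; apply commH_E_sub; auto.
  - intros g a ha. destruct hA as [hA0 | [_ [_ [_ hAn]]]].
    + now destruct (hA0 a).
    + unfold gconj. rewrite <- gmulA. now apply hAn.
  - intros g a [].
Qed.
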